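(* $\mathbf{Fin}<_{\mathrm{Learn}} Id <_{\mathrm{Learn}} \mathbf{co}$, and $\mathbf{Fin}\equiv^{\mathrm{fin}}_{\mathrm{Learn}} Id\equiv^{\mathrm{fin}}_{\mathrm{Learn}}\mathbf{co}$. That is: every $\mathbf{Fin}$-learnable family is $Id$-learnable, every $Id$-learnable family is $\mathbf{co}$-learnable, there is an $Id$-learnable family that is not $\mathbf{Fin}$-learnable, there is a $\mathbf{co}$-learnable family that is not $Id$-learnable, and for finite families the three notions coincide.
   Context: All structures are countable, have domain $\mathbb{N}$, are in a finite relational signature, and are identified with their atomic diagrams (elements of $2^{\mathbb{N}}$). A family of structures $\mathfrak{K}$ is a countable set of pairwise nonisomorphic such structures. $\mathcal{S}\restriction_s$ is the finite substructure of $\mathcal{S}$ on $\{0,\dots,s\}$. $\mathrm{LD}(\mathfrak{K})\subseteq 2^{\mathbb{N}}$ is the set of structures with domain $\mathbb{N}$ isomorphic to a member of $\mathfrak{K}$ (subspace topology). The hypothesis space is $\{\ulcorner\mathcal{A}\urcorner:\mathcal{A}\in\mathfrak{K}\}\cup\{?\}$; a learner is an arbitrary function from $\{\mathcal{S}\restriction_s:\mathcal{S}\in\mathrm{LD}(\mathfrak{K})\}$ to the hypothesis space. $\mathbf{Fin}$-learnable: some learner $\mathbf{M}$ such that for each $\mathcal{S}\in\mathrm{LD}(\mathfrak{K})$ there is $s_0$ with $\mathbf{M}(\mathcal{S}\restriction_t)=?$ for $t<s_0$ and $\mathbf{M}(\mathcal{S}\restriction_t)=\ulcorner\mathcal{A}\urcorner$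 for $t\ge s_0$, where $\mathcal{A}\cong\mathcal{S}$. $\mathbf{co}$-learnable: some learner $\mathbf{M}$ such that for each $\mathcal{S}\in\mathrm{LD}(\mathfrak{K})$, $\{\mathbf{M}(\mathcal{S}\restriction_s):s\}\setminus\{?\}=\{\ulcorner\mathcal{B}\urcorner:\mathcal{B}\in\mathfrak{K},\mathcal{B}\neq\mathcal{A}\}$ where $\mathcal{A}\cong\mathcal{S}$. For an equivalence relation $E$ on a space $X$, $\mathfrak{K}$ is $E$-learnable if there is a continuous $\Gamma:\mathrm{LD}(\mathfrak{K})\to X$ with $\mathcal{S}\cong\mathcal{S}'\iff\Gamma(\mathcal{S})\,E\,\Gamma(\mathcal{S}')$ for all $\mathcal{S},\mathcal{S}'\in\mathrm{LD}(\mathfrak{K})$. $Id$ is equality on Baire space $\mathbb{N}^{\mathbb{N}}$. For learning criteria $X,Y$ (learning paradigms or equivalence relations): $X\leq_{\mathrm{Learn}}Y$ means every $X$-learnable family is $Y$-learnable; $X\leq^{\mathrm{fin}}_{\mathrm{Learn}}Y$ means every finite $X$-learnable family is $Y$-learnable; $<$ means $\leq$ and not $\geq$; $\equiv$ means both directions. *)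

From Stdlib Require List.
From mathcomp Require Import all_boot.
Set Implicit Arguments. Unset Strict Implicit. Unset Printing Implicit Defensive.

(* A structure with domain nat is identified with its atomic diagram:
   for every symbol r and every (ar r)-tuple of naturals, a bit. *)
Definition structure (n : nat) (ar : 'I_n -> nat) : Type :=
  forall r : 'I_n, (ar r).-tuple nat -> bool.

Definition iso (n : nat) (ar : 'I_n -> nat) (S S' : structure ar) : Prop :=
  exists f : nat -> nat, bijective f /\
    forall (r : 'I_n) (t : (ar r).-tuple nat), S r t = S' r (map_tuple f t).

Definition agree_upto (n : nat) (ar : 'I_n -> nat) (s : nat)
  (S S' : structure ar) : Prop :=
  forall (r : 'I_n) (t : (ar r).-tuple nat),
    all (fun x => x <= s) t -> S r t = S' r t.

Definition struct_family (n : nat) (ar : 'I_n -> nat) (I : Type)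
  (A : I -> structure ar) : Prop :=
  (exists c : I -> nat, injective c) /\
  (forall i j : I, iso (A i) (A j) -> i = j).

Definition finite_family (I : Type) : Prop :=
  exists l : list I, forall i : I, Stdlib.Lists.List.In i l.

Definition LD (n : nat) (ar : 'I_n -> nat) (I : Type)
  (A : I -> structure ar) (S : structure ar) : Prop :=
  exists i : I, iso (A i) S.

(* A learner: maps S|_s (for S in LD(K)) to a hypothesis in
   {code of A i} u {?}, coded as option I (None = ?).  We represent it as a
   function of s and S that depends only on S|_s. *)
Definition learner (n : nat) (ar : 'I_n -> nat) (I : Type)
  (A : I -> structure ar) (M : nat -> structure ar -> option I) : Prop :=
  forall (s : nat) (S S' : structure ar), LD A S -> LD A S' ->
    agree_upto s S S' -> M s S = M s S'.

Definition Fin_learnable (n : nat) (ar : 'I_n -> nat) (I : Type)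
  (A : I -> structure ar) : Prop :=
  exists M, learner A M /\
    forall S, LD A S -> exists s0 : nat,
      (forall t, t < s0 -> M t S = None) /\
      (exists i, iso (A i) S /\ forall t, s0 <= t -> M t S = Some i).

Definition co_learnable (n : nat) (ar : 'I_n -> nat) (I : Type)
  (A : I -> structure ar) : Prop :=
  exists M, learner A M /\
    forall S, LD A S -> forall i, iso (A i) S ->
      forall j : I, (exists s, M s S = Some j) <-> j <> i.

(* Continuity of Gamma : LD(K) -> Baire space (subspace of 2^N with the
   product topology; with a finite signature, basic opens are determined by
   finite restrictions S|_s). *)
Definition continuous_on_LD (n : nat) (ar : 'I_n -> nat) (I : Type)
  (A : I -> structure ar) (G : structure ar -> nat -> nat) : Prop :=
  forall S, LD A S -> forall k : nat, exists s : nat,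
    forall S', LD A S' -> agree_upto s S S' -> G S' k = G S k.

(* E-learnability for E = Id, equality on Baire space. *)
Definition Id_learnable (n : nat) (ar : 'I_n -> nat) (I : Type)
  (A : I -> structure ar) : Prop :=
  exists G : structure ar -> nat -> nat, continuous_on_LD A G /\
    forall S S', LD A S -> LD A S' ->
      (iso S S' <-> (forall k, G S k = G S' k)).

(* Fin => Id: a Fin-learner settles on the correct index after a finite part
   of the input, so the index of the isomorphism class is a locally constant
   complete invariant.  Id => co: if G S and G (A j) differ at some coordinate,
   that coordinate is fixed on a neighbourhood of S, so seeing enough of S
   certifies that S is not a copy of A j.  For a finite family a co-learner
   eventually lists every wrong index, and the single index left is the answer.

   The separating families consist of disjoint unions of cycles.  In
   [cycles_odd_at i] the lengths are 2, 4, 6, ... except that 2i becomes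
   2i + 1; having a cycle of length 2k + 3 (resp. 2k + 2) is an open property
   saying i = k + 1 (resp. i <> k + 1), which gives Id-learnability, while
   [cycles_odd_at 0] is a limit of [cycles_odd_at i] for i -> oo, which rules
   out Fin.  In [cycles_two_at i] the lengths are 3, 4, 5, ... except that
   i + 2 becomes 2; a cycle of length j + 2 certifies j <> i, giving
   co-learnability, but copies of [cycles_two_at n] approximate both
   [cycles_two_at 0] and [cycles_two_at 1], which rules out Id. *)

From mathcomp Require Import all_boot zify.
From Stdlib Require Import Classical ClassicalEpsilon FunctionalExtensionality PropExtensionality.
From Stdlib Require Cantor.
Set Implicit Arguments. Unset Strict Implicit. Unset Printing Implicit Defensive.

Definition opt_witness (I : Type) (P : I -> Prop) : option I :=
  match excluded_middle_informative (exists i, P i) with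
  | left exP => Some (proj1_sig (constructive_indefinite_description _ exP))
  | right _ => None
  end.

Lemma opt_witnessP (I : Type) (P : I -> Prop) i : opt_witness P = Some i -> P i.
Proof.
rewrite /opt_witness; case: excluded_middle_informative => // exP [<-].
exact: proj2_sig.
Qed.

Lemma opt_witness_ex (I : Type) (P : I -> Prop) :
  (exists i, P i) -> exists2 i, opt_witness P = Some i & P i.
Proof.
move=> exP; case E: (opt_witness P) => [i|]; first by exists i; last exact: opt_witnessP E.
by move: E; rewrite /opt_witness; case: excluded_middle_informative.
Qed.

Lemma opt_witness_ext (I : Type) (P Q : I -> Prop) :
  (forall i, P i <-> Q i) -> opt_witness P = opt_witness Q.
Proof.
move=> PQ; congr opt_witness; apply: functional_extensionality => i.
exact: propositional_extensionality.
Qed.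

Lemma list_uniform_bound (J : Type) (l : list J) (P : J -> nat -> Prop) :
  (forall j, exists t, P j t) ->
  exists s, forall j, List.In j l -> exists2 t, t <= s & P j t.
Proof.
move=> exP; elim: l => [|j l [s IH]]; first by exists 0.
have [t Pt] := exP j; exists (maxn s t) => k [<-|kl].
  by exists t; first exact: leq_maxr.
by have [u le_us Pu] := IH k kl; exists u; first exact: leq_trans le_us (leq_maxl _ _).
Qed.

Definition prop_bit (P : Prop) : nat := if excluded_middle_informative P then 1 else 0.

Lemma prop_bit_eq (P Q : Prop) : prop_bit P = prop_bit Q <-> (P <-> Q).
Proof.
rewrite /prop_bit.
by case: excluded_middle_informative => p; case: excluded_middle_informative => q /=;
  split=> // E; tauto.
Qed.

Definition cpair (j r : nat) : nat := Cantor.to_nat (j, r).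
Definition cfst (x : nat) : nat := (Cantor.of_nat x).1.
Definition csnd (x : nat) : nat := (Cantor.of_nat x).2.

Lemma cfst_pair j r : cfst (cpair j r) = j.
Proof. by rewrite /cfst /cpair Cantor.cancel_of_to. Qed.

Lemma csnd_pair j r : csnd (cpair j r) = r.
Proof. by rewrite /csnd /cpair Cantor.cancel_of_to. Qed.

Lemma cpairK x : cpair (cfst x) (csnd x) = x.
Proof. by rewrite /cpair /cfst /csnd -surjective_pairing Cantor.cancel_to_of. Qed.

Lemma cpair_inj j : injective (cpair j).
Proof. by move=> r r' /(congr1 csnd); rewrite !csnd_pair. Qed.

Lemma leq_cpair_fst j r : j <= cpair j r.
Proof. by have := Cantor.to_nat_non_decreasing j r; rewrite -/(cpair j r); lia. Qed.

Lemma leq_cpair_snd j r : r <= cpair j r.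
Proof. by have := Cantor.to_nat_non_decreasing j r; rewrite -/(cpair j r); lia. Qed.

Lemma cfst_leq x : cfst x <= x.
Proof. by rewrite -{2}(cpairK x) leq_cpair_fst. Qed.

Section Isomorphism.

Variables (n : nat) (ar : 'I_n -> nat).
Implicit Types S T : structure ar.

Lemma iso_refl S : iso S S.
Proof.
exists id; split; first by exists id.
by move=> r t; congr (S r _); apply: val_inj; rewrite /= map_id.
Qed.

Lemma iso_sym S T : iso S T -> iso T S.
Proof.
move=> [f [[g fK gK] Hf]]; exists g; split; first by exists f.
move=> r t; rewrite Hf; congr (T r _); apply: val_inj => /=.
by rewrite -map_comp (eq_map gK) map_id.
Qed.

Lemma iso_trans S1 S2 S3 : iso S1 S2 -> iso S2 S3 -> iso S1 S3.
Proof.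
move=> [f [bij_f Hf]] [g [bij_g Hg]]; exists (g \o f); split; first exact: bij_comp.
by move=> r t; rewrite Hf Hg; congr (S3 r _); apply: val_inj; rewrite /= map_comp.
Qed.

Lemma agree_upto_sym s S T : agree_upto s S T -> agree_upto s T S.
Proof. by move=> ST r t t_s; rewrite ST. Qed.

Lemma agree_upto_trans s S1 S2 S3 :
  agree_upto s S1 S2 -> agree_upto s S2 S3 -> agree_upto s S1 S3.
Proof. by move=> S12 S23 r t t_s; rewrite S12 // S23. Qed.

Lemma agree_upto_le s s' S T : s' <= s -> agree_upto s S T -> agree_upto s' S T.
Proof.
move=> le_s's ST r t t_s'; apply: ST.
by apply: sub_all t_s' => x /= x_s'; apply: leq_trans le_s's.
Qed.

End Isomorphism.

Section Learning.

Variables (n : nat) (ar : 'I_n -> nat) (I : Type) (A : I -> structure ar).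
Hypothesis familyA : struct_family A.
Implicit Types S T : structure ar.

Lemma LD_member i : LD A (A i).
Proof. by exists i; apply: iso_refl. Qed.

Lemma family_iso_uniq i j S : iso (A i) S -> iso (A j) S -> i = j.
Proof. by move=> iS jS; apply: familyA.2; apply: iso_trans iS (iso_sym jS). Qed.

Definition class_of S : option I := opt_witness (fun i => iso (A i) S).

Lemma class_ofE i S : iso (A i) S -> class_of S = Some i.
Proof.
move=> iS; rewrite /class_of.
have [j -> jS] := @opt_witness_ex _ (fun j => iso (A j) S) (ex_intro _ i iS).
by rewrite (family_iso_uniq jS iS).
Qed.

Lemma Fin_learnable_locally_iso :
  Fin_learnable A -> forall S, LD A S ->
  exists s, forall T, LD A T -> agree_upto s S T -> iso S T.
Proof.
move=> [M [learnerM finM]] S LS.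
have [s [_ [i [iS M_i]]]] := finM S LS.
exists s => T LT ST.
have MT : M s T = Some i.
  by rewrite -(M_i s (leqnn s)); apply: learnerM => //; apply: agree_upto_sym.
have [sT [noneT [j [jT M_j]]]] := finM T LT.
case: (ltnP s sT) => [/noneT|/M_j]; rewrite MT // => -[ij].
by apply: iso_trans (iso_sym iS) _; rewrite ij.
Qed.

Lemma Fin_learnable_Id_learnable : Fin_learnable A -> Id_learnable A.
Proof.
move=> finA; have [c c_inj] := familyA.1.
exists (fun S _ => oapp c 0 (class_of S)); split.
  move=> S [i iS] _; have [s locS] := Fin_learnable_locally_iso finA (ex_intro _ i iS).
  exists s => T LT ST.
  by rewrite (class_ofE iS) (class_ofE (iso_trans iS (locS T LT ST))).
move=> S T [i iS] [j jT]; rewrite (class_ofE iS) (class_ofE jT) /=; split.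
  by move=> ST _; rewrite (family_iso_uniq jT (iso_trans iS ST)).
by move=> /(_ 0) /c_inj ij; apply: iso_trans (iso_sym iS) _; rewrite ij.
Qed.

Lemma Id_learnable_of_invariants (P : nat -> structure ar -> Prop) :
  (forall k S T, iso S T -> P k S -> P k T) ->
  (forall k S, LD A S ->
     exists s, forall T, LD A T -> agree_upto s S T -> (P k T <-> P k S)) ->
  (forall S T, LD A S -> LD A T -> (forall k, P k S <-> P k T) -> iso S T) ->
  Id_learnable A.
Proof.
move=> invP locP completeP; exists (fun S k => prop_bit (P k S)); split.
  move=> S LS k; have [s locS] := locP k S LS.
  by exists s => T LT ST; apply/prop_bit_eq/locS.
move=> S T LS LT; split=> [ST k | PST].
  by apply/prop_bit_eq; split; apply: invP; last apply: iso_sym.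
by apply: completeP => // k; apply/prop_bit_eq.
Qed.

Lemma Id_learnable_separates :
  Id_learnable A -> forall S0 S1, LD A S0 -> LD A S1 -> ~ iso S0 S1 ->
  exists s, forall T0 T1, LD A T0 -> LD A T1 ->
    agree_upto s S0 T0 -> agree_upto s S1 T1 -> ~ iso T0 T1.
Proof.
move=> [G [contG invG]] S0 S1 LS0 LS1 S01.
have [k Gk] : exists k, G S0 k <> G S1 k.
  by apply: not_all_ex_not => /(invG _ _ LS0 LS1).2.
have [s0 loc0] := contG S0 LS0 k; have [s1 loc1] := contG S1 LS1 k.
exists (maxn s0 s1) => T0 T1 LT0 LT1 ST0 ST1 /(invG _ _ LT0 LT1).1 /(_ k).
by rewrite (loc0 T0 LT0 (agree_upto_le (leq_maxl _ _) ST0))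
           (loc1 T1 LT1 (agree_upto_le (leq_maxr _ _) ST1)).
Qed.

Lemma co_learnable_of_separators (D : I -> structure ar -> Prop) :
  (forall i j S, iso (A i) S -> D j S <-> j <> i) ->
  (forall j S, LD A S -> D j S ->
     exists s, forall T, LD A T -> agree_upto s S T -> D j T) ->
  co_learnable A.
Proof.
move=> sepD openD; have [c c_inj] := familyA.1.
pose forced s S j := forall T, LD A T -> agree_upto s S T -> D j T.
(* At stage [s] only the index coded by [cfst s] is tested, which dovetails
   over all indices and all sizes of the neighbourhood. *)
exists (fun s S => opt_witness (fun j => c j = cfst s /\ forced s S j)); split.
  move=> s S S' _ _ SS'; apply: opt_witness_ext => j.
  split=> -[cj FS]; split=> // T LT ST; apply: FS LT _.
    exact: agree_upto_trans SS' ST.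
  exact: agree_upto_trans (agree_upto_sym SS') ST.
move=> S LS i iS j; split.
  move=> [s Ms]; have [_ FS] := opt_witnessP Ms; apply/(sepD _ _ _ iS).
  by apply: (FS S LS).
move=> ji; have [s0 FS0] := openD j S LS ((sepD _ _ _ iS).2 ji).
pose s := cpair (c j) s0.
have le_s0 : s0 <= s := leq_cpair_snd (c j) s0.
have [j' Ej' [cj' _]] := @opt_witness_ex _ (fun j' => c j' = cfst s /\ forced s S j')
  (ex_intro _ j (conj (esym (cfst_pair _ _))
     (fun T LT ST => FS0 T LT (agree_upto_le le_s0 ST)))).
by exists s; rewrite Ej'; congr Some; apply: c_inj; rewrite cj' cfst_pair.
Qed.

Lemma Id_learnable_co_learnable : Id_learnable A -> co_learnable A.
Proof.
move=> [G [contG invG]].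
apply: (@co_learnable_of_separators (fun j S => exists k, G S k <> G (A j) k)).
  move=> i j S iS; have LS : LD A S by exists i.
  split=> [[k Gk] ji|ji].
    by apply: Gk; rewrite ji; apply: (invG _ _ LS (LD_member i)).1 (iso_sym iS) k.
  apply: not_all_ex_not => /(invG _ _ LS (LD_member j)).2 Sj.
  by apply: ji; apply: family_iso_uniq (iso_sym Sj) iS.
move=> j S LS [k Gk]; have [s locS] := contG S LS k.
by exists s => T LT ST; exists k; rewrite (locS T LT ST).
Qed.

Section CoLearner.

Variable M : nat -> structure ar -> option I.
Hypothesis learnerM : learner A M.
Hypothesis coM : forall S, LD A S -> forall i, iso (A i) S ->
  forall j, (exists s, M s S = Some j) <-> j <> i.

Definition listed_but s S i := forall j, j <> i -> exists2 t, t <= s & M t S = Some j.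

Lemma listed_but_agree s S S' i : LD A S -> LD A S' -> agree_upto s S S' ->
  listed_but s S i <-> listed_but s S' i.
Proof.
move=> LS LS' SS'.
have MS t : t <= s -> M t S = M t S'.
  by move=> le_ts; apply: learnerM => //; apply: agree_upto_le le_ts SS'.
split=> listed j ji; have [t le_ts Mt] := listed j ji; exists t => //.
  by rewrite -MS.
by rewrite MS.
Qed.

Lemma listed_but_le s s' S i : s <= s' -> listed_but s S i -> listed_but s' S i.
Proof.
move=> le_ss' listed j ji; have [t le_ts Mt] := listed j ji.
by exists t; first exact: leq_trans le_ss'.
Qed.

Lemma listed_but_class s S i i' : iso (A i) S -> listed_but s S i' -> i' = i.
Proof.
move=> iS listed; apply: NNPP => i'i; have [t _ Mt] := listed i (nesym i'i).
exact: (coM (ex_intro _ i iS) iS i).1 (ex_intro _ t Mt) erefl.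
Qed.

Lemma listed_but_eventually S i : finite_family I -> iso (A i) S ->
  exists s, listed_but s S i.
Proof.
move=> [l l_all] iS.
have exM j : exists t, j <> i -> M t S = Some j.
  case: (classic (j = i)) => [-> | ji]; first by exists 0.
  by have [t Mt] := (coM (ex_intro _ i iS) iS j).2 ji; exists t.
have [s bound] := list_uniform_bound l exM.
by exists s => j ji; have [t le_ts Mt] := bound j (l_all j); exists t; last exact: Mt.
Qed.

End CoLearner.

Lemma co_learnable_Fin_learnable : finite_family I -> co_learnable A -> Fin_learnable A.
Proof.
move=> finI [M [learnerM coM]].
exists (fun s S => opt_witness (listed_but M s S)); split.
  move=> s S S' LS LS' SS'; apply: opt_witness_ext => i.
  exact: listed_but_agree.
move=> S [i iS]; have [s1 listed1] := listed_but_eventually coM finI iS.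
have exP : exists s, isSome (opt_witness (listed_but M s S)).
  by exists s1; have [j -> _] := opt_witness_ex (ex_intro _ i listed1).
case: (ex_minnP exP) => s0 some0 min0; exists s0; split.
  move=> t lt_ts0; case Et: (opt_witness _) => [j|] //.
  by have := min0 t; rewrite Et leqNgt lt_ts0 => /(_ isT).
exists i; split=> // t le_s0t.
case E0: (opt_witness _) some0 => [i0|] // _.
have listed0 := opt_witnessP E0.
have i0i := listed_but_class coM iS listed0; subst i0.
have [j -> listed_t] := opt_witness_ex (ex_intro _ i (listed_but_le le_s0t listed0)).
by rewrite (listed_but_class coM iS listed_t).
Qed.

End Learning.

Lemma fcycle_traject (T : eqType) (f : T -> T) x m :
  iter m f x = x -> fcycle f (traject f x m).
Proof.
case: m => [//|m] ret; rewrite trajectS /=.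
by rewrite -{3}ret iterSr -trajectSr fpath_traject.
Qed.

Lemma fcycle_iter (T : eqType) (f : T -> T) x p :
  fcycle f (x :: p) -> uniq (x :: p) ->
  iter (size p).+1 f x = x /\ forall k, 0 < k <= size p -> iter k f x != x.
Proof.
move=> cyc uniq_xp; have := fpathE cyc.
rewrite size_rcons trajectSr -iterSr => /rcons_inj [p_trj x_ret].
split=> // k /andP [k_gt0 k_le].
have := nth_uniq x (_ : k < size (x :: p)) (ltn0Sn _) uniq_xp.
by rewrite gtn_eqF // {2}p_trj -trajectS nth_traject //= ltnS => /(_ k_le) ->.
Qed.

Definition graph_sig : 'I_1 -> nat := fun _ => 2.

Definition edge (S : structure graph_sig) (x y : nat) : bool := S ord0 [tuple x; y].

Definition has_cycle (m : nat) (S : structure graph_sig) : Prop :=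
  exists ls : seq nat, [/\ size ls = m, uniq ls & cycle (edge S) ls].

Lemma has_cycle_open m S : has_cycle m S ->
  exists s, forall T, agree_upto s S T -> has_cycle m T.
Proof.
move=> [ls [size_ls uniq_ls cyc]]; exists (\max_(x <- ls) x) => T ST.
exists ls; split=> //.
rewrite -(@eq_in_cycle _ (fun x => x <= \max_(y <- ls) y) (edge S)) //.
  by move=> x y x_le y_le; rewrite /edge ST //=; move: x_le y_le; rewrite -!topredE /= => -> ->.
by apply/allP => x x_ls; apply: leq_bigmax_seq.
Qed.

Lemma has_cycle_iso m S T : iso S T -> has_cycle m S -> has_cycle m T.
Proof.
move=> [f [bij_f Hf]] [ls [size_ls uniq_ls cyc]]; exists (map f ls); split.
- by rewrite size_map.
- by rewrite (map_inj_uniq (bij_inj bij_f)).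
rewrite cycle_map; move: cyc; congr is_true; apply: eq_cycle => x y /=.
by rewrite /edge Hf; congr (T ord0 _); apply: val_inj.
Qed.

Lemma has_cycle_iso_iff m S T : iso S T -> has_cycle m S <-> has_cycle m T.
Proof. by move=> ST; split; apply: has_cycle_iso; last apply: iso_sym. Qed.

(* The vertex [cpair j r] is position [r] of component [j]; positions below
   [sg j] form a cycle of length [sg j], every other position carries a loop. *)
Definition cycle_step (q r : nat) : nat := if r < q then r.+1 %% q else r.

Definition cnext (sg : nat -> nat) (x : nat) : nat :=
  cpair (cfst x) (cycle_step (sg (cfst x)) (csnd x)).

Definition cycles (sg : nat -> nat) : structure graph_sig :=
  fun _ t => cnext sg (nth 0 t 0) == nth 0 t 1.

Lemma cycle_edge_cycles sg ls : cycle (edge (cycles sg)) ls = fcycle (cnext sg) ls.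
Proof. by []. Qed.

Lemma iter_cnext sg j r k :
  iter k (cnext sg) (cpair j r) = cpair j (iter k (cycle_step (sg j)) r).
Proof. by elim: k => //= k ->; rewrite /cnext cfst_pair csnd_pair. Qed.

Lemma iter_cycle_step_lt q r k : r < q -> iter k (cycle_step q) r = (r + k) %% q.
Proof.
move=> rq; elim: k => [|k IH] /=; first by rewrite addn0 modn_small.
by rewrite IH /cycle_step ltn_pmod ?(leq_ltn_trans (leq0n r) rq) // -addn1 modnDml addn1 addnS.
Qed.

Lemma iter_cycle_step_ge q r k : q <= r -> iter k (cycle_step q) r = r.
Proof. by move=> qr; elim: k => //= k ->; rewrite /cycle_step ltnNge qr. Qed.

Lemma cycle_step_period q r m : 1 < m ->
  iter m (cycle_step q) r = r ->
  (forall k, 0 < k < m -> iter k (cycle_step q) r != r) -> q = m.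
Proof.
move=> m_gt1 ret noret; case: (ltnP r q) => [rq|qr]; last first.
  by have := noret 1; rewrite iter_cycle_step_ge // eqxx m_gt1 => /(_ isT).
rewrite iter_cycle_step_lt // in ret.
have dvd_qm : q %| m.
  have : (r + m) %% q == (r + 0) %% q by rewrite ret addn0 modn_small.
  by rewrite eqn_modDl mod0n.
have := dvdn_leq (ltnW m_gt1) dvd_qm; rewrite leq_eqVlt => /orP [/eqP //|lt_qm].
have := noret q; rewrite iter_cycle_step_lt // modnDr modn_small // eqxx lt_qm.
by rewrite (leq_ltn_trans (leq0n r) rq) => /(_ isT).
Qed.

Lemma cycles_has_cycle sg j m : sg j = m -> 0 < m -> has_cycle m (cycles sg).
Proof.
move=> sgj m_gt0; pose x := cpair j 0.
have iterx k : iter k (cnext sg) x = cpair j (k %% m).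
  by rewrite iter_cnext iter_cycle_step_lt sgj.
exists (traject (cnext sg) x m); split.
- exact: size_traject.
- case: m m_gt0 sgj iterx => // m _ _ iterx; rewrite looping_uniq.
  apply/trajectP => -[i lt_im]; rewrite !iterx => /cpair_inj.
  by rewrite !modn_small ?ltnS ?(ltnW lt_im) // => eq_mi; move: lt_im; rewrite -eq_mi ltnn.
- by rewrite cycle_edge_cycles; apply: fcycle_traject; rewrite iterx modnn.
Qed.

Lemma has_cycle_cycles sg m : 1 < m -> has_cycle m (cycles sg) -> exists j, sg j = m.
Proof.
move=> m_gt1 [[|x p] [size_xp uniq_xp cyc]]; first by move: m_gt1; rewrite -size_xp.
rewrite cycle_edge_cycles in cyc; have [ret noret] := fcycle_iter cyc uniq_xp.
move: size_xp => /= size_xp; exists (cfst x).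
apply: (@cycle_step_period _ (csnd x) _ m_gt1).
  by apply: (@cpair_inj (cfst x)); rewrite -iter_cnext cpairK -size_xp.
move=> k; rewrite -size_xp ltnS => k_range; have := noret k; rewrite k_range => /(_ isT).
by rewrite -{1 2}(cpairK x) iter_cnext (inj_eq (@cpair_inj _)).
Qed.

Lemma has_cycle_cyclesE sg m : 1 < m -> has_cycle m (cycles sg) <-> exists j, sg j = m.
Proof.
move=> m_gt1; split; first exact: has_cycle_cycles.
by move=> [j sgj]; apply: cycles_has_cycle sgj (ltnW m_gt1).
Qed.

Lemma cycles_agree sg sg' s : (forall j, j <= s -> sg j = sg' j) ->
  agree_upto s (cycles sg) (cycles sg').
Proof.
move=> sg_s r t t_s; rewrite /cycles /cnext sg_s //.
apply: leq_trans (cfst_leq _) _; apply: (allP t_s).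
by apply: mem_nth; rewrite size_tuple.
Qed.

Lemma cycles_perm sg p : bijective p -> iso (cycles (sg \o p)) (cycles sg).
Proof.
move=> [q pK qK]; pose f x := cpair (p (cfst x)) (csnd x).
have bij_f : bijective f.
  by exists (fun x => cpair (q (cfst x)) (csnd x)) => x;
    rewrite /f cfst_pair csnd_pair ?pK ?qK cpairK.
exists f; split=> // r t; rewrite /cycles /=.
have size_t : size t = 2 by rewrite size_tuple.
rewrite !(nth_map 0) ?size_t //.
have -> : cnext sg (f (nth 0 t 0)) = f (cnext (sg \o p) (nth 0 t 0)).
  by rewrite /f /cnext !cfst_pair !csnd_pair.
by rewrite (inj_eq (bij_inj bij_f)).
Qed.

Lemma eq_of_succ_iff (i i' : nat) : (forall k, i = k.+1 <-> i' = k.+1) -> i = i'.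
Proof.
case: i => [|i] ii'; case: i' ii' => [|i'] ii' //.
- by have := (ii' i').2 erefl.
- by have := (ii' i).1 erefl.
- by have := (ii' i).1 erefl => -[->].
Qed.

Definition cycles_odd_at (i : nat) : structure graph_sig :=
  cycles (fun j => 2 * j.+1 + (j.+1 == i)).

Lemma has_cycle_odd_at_odd k i : has_cycle (2 * k + 3) (cycles_odd_at i) <-> i = k.+1.
Proof.
rewrite has_cycle_cyclesE; last by lia.
split=> [[j]|->]; last by exists k; rewrite eqxx /=; lia.
by case: eqP => /= ij; lia.
Qed.

Lemma has_cycle_odd_at_even k i : has_cycle (2 * k + 2) (cycles_odd_at i) <-> i <> k.+1.
Proof.
rewrite has_cycle_cyclesE; last by lia.
split=> [[j]|ik]; last by exists k; case: eqP => /= ?; lia.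
by case: eqP => /= ij; lia.
Qed.

Lemma cycles_odd_at_family : struct_family cycles_odd_at.
Proof.
split=> [|i i' ii']; first by exists id.
apply: eq_of_succ_iff => k; rewrite -!has_cycle_odd_at_odd.
exact: has_cycle_iso_iff.
Qed.

Lemma cycles_odd_at_Id_learnable : Id_learnable cycles_odd_at.
Proof.
apply: (@Id_learnable_of_invariants _ _ _ _ (fun k => has_cycle (2 * k + 3))).
- by move=> k S T; apply: has_cycle_iso.
- move=> k S [i iS]; have oddS := has_cycle_iso_iff (2 * k + 3) iS.
  case: (classic (i = k.+1)) => [ik|ik].
    have [s openS] := has_cycle_open ((oddS.1 ((has_cycle_odd_at_odd k i).2 ik))).
    by exists s => T _ ST; split=> // _; apply: openS.
  have evenS := (has_cycle_iso_iff (2 * k + 2) iS).1 ((has_cycle_odd_at_even k i).2 ik).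
  have [s openS] := has_cycle_open evenS.
  exists s => T [i' i'T] ST.
  have i'k : i' <> k.+1.
    by apply/has_cycle_odd_at_even/(has_cycle_iso_iff _ i'T).2/openS.
  rewrite -(has_cycle_iso_iff _ i'T) -(has_cycle_iso_iff _ iS) !has_cycle_odd_at_odd.
  by split.
- move=> S T [i iS] [i' i'T] ST; have ii' : i = i'.
    apply: eq_of_succ_iff => k; rewrite -!has_cycle_odd_at_odd.
    by rewrite (has_cycle_iso_iff _ iS) (has_cycle_iso_iff _ i'T).
  by apply: iso_trans (iso_sym iS) _; rewrite ii'.
Qed.

Lemma cycles_odd_at_not_Fin_learnable : ~ Fin_learnable cycles_odd_at.
Proof.
move=> /Fin_learnable_locally_iso /(_ _ (LD_member _ 0)) [s loc].
have agree0 : agree_upto s (cycles_odd_at 0) (cycles_odd_at s.+2).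
  by apply: cycles_agree => j j_s /=; case: eqP => //; lia.
by have /cycles_odd_at_family.2 := loc _ (LD_member _ s.+2) agree0.
Qed.

Definition cycles_two_at (i : nat) : structure graph_sig :=
  cycles (fun j => if j.+1 == i then 2 else j + 3).

Lemma has_cycle_two_at k i : has_cycle (k + 2) (cycles_two_at i) <-> k <> i.
Proof.
rewrite has_cycle_cyclesE; last by lia.
split=> [[j]|ki]; first by case: eqP => ij; lia.
case: k ki => [|k] ki; first by exists i.-1; case: eqP => //; lia.
by exists k; case: eqP => //; lia.
Qed.

Lemma cycles_two_at_family : struct_family cycles_two_at.
Proof.
split=> [|i i' ii']; first by exists id.
apply: NNPP => /nesym /(has_cycle_two_at i' i).2 /(has_cycle_iso ii').
by move/has_cycle_two_at.
Qed.

Lemma cycles_two_at_co_learnable : co_learnable cycles_two_at.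
Proof.
apply: (@co_learnable_of_separators _ _ _ _ cycles_two_at_family
          (fun j => has_cycle (j + 2))).
  by move=> i j S iS; rewrite -(has_cycle_iso_iff _ iS) has_cycle_two_at.
by move=> j S _ /has_cycle_open [s openS]; exists s => T _; apply: openS.
Qed.

Lemma cycles_two_at_not_Id_learnable : ~ Id_learnable cycles_two_at.
Proof.
move=> /Id_learnable_separates /(_ _ _ (LD_member _ 0) (LD_member _ 1)).
case=> [/cycles_two_at_family.2 // | s sep].
pose sw j := if j == 0 then s.+1 else if j == s.+1 then 0 else j.
have swK : cancel sw sw by move=> j; rewrite /sw; do !case: eqP => /=; lia.
pose sg j := if j.+1 == s.+2 then 2 else j + 3.
have iso_sw : iso (cycles (sg \o sw)) (cycles_two_at s.+2) by apply: cycles_perm; exists sw.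
apply: (sep (cycles_two_at s.+2) (cycles (sg \o sw))).
- exact: LD_member.
- by exists s.+2; apply: iso_sym.
- by apply: cycles_agree => j j_s /=; case: eqP => //; lia.
- by apply: cycles_agree => j j_s; rewrite /sg /sw /=; do !case: eqP => /=; lia.
- exact: iso_sym.
Qed.

Theorem mainTheorem5 :
  (* Fin <=_Learn Id *)
  (forall (n : nat) (ar : 'I_n -> nat) (I : Type) (A : I -> structure ar),
      struct_family A -> Fin_learnable A -> Id_learnable A) /\
  (* Id <=_Learn co *)
  (forall (n : nat) (ar : 'I_n -> nat) (I : Type) (A : I -> structure ar),
      struct_family A -> Id_learnable A -> co_learnable A) /\
  (* not Id <=_Learn Fin *)
  (exists (n : nat) (ar : 'I_n -> nat) (I : Type) (A : I -> structure ar),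
      struct_family A /\ Id_learnable A /\ ~ Fin_learnable A) /\
  (* not co <=_Learn Id *)
  (exists (n : nat) (ar : 'I_n -> nat) (I : Type) (A : I -> structure ar),
      struct_family A /\ co_learnable A /\ ~ Id_learnable A) /\
  (* on finite families the three criteria coincide *)
  (forall (n : nat) (ar : 'I_n -> nat) (I : Type) (A : I -> structure ar),
      struct_family A -> finite_family I ->
      (Fin_learnable A <-> Id_learnable A) /\
      (Id_learnable A <-> co_learnable A)).
Proof.
split; first exact: Fin_learnable_Id_learnable.
split; first exact: Id_learnable_co_learnable.
split.
  exists 1, graph_sig, nat, cycles_odd_at.
  by split; [exact: cycles_odd_at_family | split; [exact: cycles_odd_at_Id_learnable
                                           | exact: cycles_odd_at_not_Fin_learnable]].
split.
  exists 1, graph_sig, nat, cycles_two_at.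
  by split; [exact: cycles_two_at_family | split; [exact: cycles_two_at_co_learnable
                                           | exact: cycles_two_at_not_Id_learnable]].
move=> n ar I A familyA finI.
have co_Fin := co_learnable_Fin_learnable finI.
have Id_co := Id_learnable_co_learnable familyA.
have Fin_Id := Fin_learnable_Id_learnable familyA.
split; split.
- exact: Fin_Id.
- by move=> /Id_co /co_Fin.
- exact: Id_co.
- by move=> /co_Fin /Fin_Id.
Qed.
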